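(* Let $\Lambda$ be an artin algebra, $n\ge2$, and let $f\colon X\to Y$ be an irreducible morphism in $\mathbf{C_n}({\rm proj}\,\Lambda)$ with $X$ or $Y$ indecomposable. (a) If $f$ is of type (ret), then ${\rm Ker}\,f$ is a non-zero indecomposable complex belonging to $\mathbf{C_n}({\rm proj}\,\Lambda)$. (b) If $f$ is of type (sec), then ${\rm Coker}\,f$ is an indecomposable complex belonging to $\mathbf{C_n}({\rm proj}\,\Lambda)$.
   Context: For an artin algebra $\Lambda$ and $n\ge 2$, $\mathbf{C_n}({\rm proj}\,\Lambda)$ is the full subcategory of the category of complexes of finitely generated right $\Lambda$-modules consisting of complexes $X=(X^i,d^i_X)$ with $X^i$ projective for all $i$ and $X^i=0$ for $i\notin\{1,\dots,n\}$; morphisms are chain maps. Kernels and cokernels are computed degreewise with induced differentials. A morphism in $\mathbf{C_n}({\rm proj}\,\Lambda)$ is irreducible if it is neither a section nor a retraction, and whenever $f=gh$ then $h$ is a section or $g$ is a retraction. An irreducible $f=\{f^i\}$ is of type (sec) if every $f^i$ is a section in ${\rm proj}\,\Lambda$, and of type (ret) if every $f^i$ is a retraction in ${\rm proj}\,\Lambda$. *)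

(* Right Lambda-modules are modelled as left modules over the
   converse ring Lambda^c, i.e. as [lmodType Lambda^c]. *)
From HB Require Import structures.
From mathcomp Require Import all_boot all_order all_algebra.
Set Implicit Arguments. Unset Strict Implicit. Unset Printing Implicit Defensive.
Import Order.TTheory GRing.Theory Num.Theory.
Local Open Scope ring_scope.

Definition is_ideal (K : comNzRingType) (I : K -> Prop) : Prop :=
  I 0 /\ (forall x y, I x -> I y -> I (x + y)) /\ (forall a x, I x -> I (a * x)).

Definition artinian_ring (K : comNzRingType) : Prop :=
  forall I : nat -> K -> Prop, (forall k, is_ideal (I k)) ->
    (forall k x, I k.+1 x -> I k x) ->
    exists N, forall k, (N <= k)%N -> forall x, I k x <-> I N x.

Definition artin_algebra (L : nzRingType) : Prop :=
  exists (K : comNzRingType) (phi : {rmorphism K -> L}),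
    [/\ artinian_ring K,
        (forall a x, phi a * x = x * phi a) &
        exists s : seq L, forall x : L,
          exists c : 'I_(size s) -> K, x = \sum_(i < size s) phi (c i) * s`_i].

Definition lin (L : nzRingType) (M N : lmodType L^c) (g : M -> N) : Prop :=
  forall (a : L^c) (x y : M), g (a *: x + y) = a *: g x + g y.

Definition fin_gen (L : nzRingType) (M : lmodType L^c) : Prop :=
  exists s : seq M, forall x : M,
    exists c : 'I_(size s) -> L^c, x = \sum_(i < size s) c i *: s`_i.

Definition projective_mod (L : nzRingType) (P : lmodType L^c) : Prop :=
  forall (M N : lmodType L^c) (g : M -> N) (h : P -> N),
    lin g -> lin h -> (forall y, exists x, g x = y) ->
    exists h' : P -> M, lin h' /\ forall p, g (h' p) = h p.

Unset Implicit Arguments.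
Record cplx (L : nzRingType) := Cplx {
  cobj : int -> lmodType L^c;
  cd : forall i : int, cobj i -> cobj (i + 1);
  cd_lin : forall i, lin (cd i);
  cd_cd : forall i x, cd (i + 1) (cd i x) = 0 }.

Arguments cobj {L} c i.
Arguments cd {L} c i _.
Arguments cd_lin {L} c i.
Arguments cd_cd {L} c i x.

Record chain_map (L : nzRingType) (X Y : cplx L) := ChainMap {
  cm :> forall i : int, cobj X i -> cobj Y i;
  cm_lin : forall i, lin (cm i);
  cm_comm : forall i x, cm (i + 1) (cd X i x) = cd Y i (cm i x) }.

Arguments chain_map {L} X Y.
Arguments ChainMap {L X Y} cm cm_lin cm_comm.
Arguments cm {L X Y} c i _.
Arguments cm_lin {L X Y} c i.
Arguments cm_comm {L X Y} c i x.
Set Implicit Arguments.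

Section Ops.
Variable L : nzRingType.

Definition cm_eq (X Y : cplx L) (f g : chain_map X Y) : Prop :=
  forall i x, f i x = g i x.

Definition cplx_zero (X : cplx L) : Prop := forall i (x : cobj X i), x = 0.

Definition in_Cn (n : nat) (X : cplx L) : Prop :=
  (forall i, fin_gen (cobj X i) /\ projective_mod (cobj X i)) /\
  (forall i : int, (i <= 0) || (n%:Z < i) -> forall x : cobj X i, x = 0).

Definition is_section (X Y : cplx L) (h : chain_map X Y) : Prop :=
  exists r : chain_map Y X, forall i x, r i (h i x) = x.

Definition is_retraction (X Y : cplx L) (g : chain_map X Y) : Prop :=
  exists s : chain_map Y X, forall i y, g i (s i y) = y.

Definition irreducible (n : nat) (X Y : cplx L) (f : chain_map X Y) : Prop :=
  ~ is_section f /\ ~ is_retraction f /\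
  forall (Z : cplx L) (h : chain_map X Z) (g : chain_map Z Y),
    in_Cn n Z -> (forall i x, f i x = g i (h i x)) ->
    is_section h \/ is_retraction g.

Definition type_sec (X Y : cplx L) (f : chain_map X Y) : Prop :=
  forall i, exists r : cobj Y i -> cobj X i, lin r /\ forall x, r (f i x) = x.

Definition type_ret (X Y : cplx L) (f : chain_map X Y) : Prop :=
  forall i, exists s : cobj Y i -> cobj X i, lin s /\ forall y, f i (s y) = y.

Definition indecomposable (X : cplx L) : Prop :=
  ~ cplx_zero X /\
  forall (X1 X2 : cplx L) (i1 : chain_map X1 X) (i2 : chain_map X2 X)
         (p1 : chain_map X X1) (p2 : chain_map X X2),
    (forall k x, p1 k (i1 k x) = x) -> (forall k x, p2 k (i2 k x) = x) ->
    (forall k x, p2 k (i1 k x) = 0) -> (forall k x, p1 k (i2 k x) = 0) ->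
    (forall k x, i1 k (p1 k x) + i2 k (p2 k x) = x) ->
    cplx_zero X1 \/ cplx_zero X2.

Definition is_kernel (X Y K : cplx L) (f : chain_map X Y) (iota : chain_map K X)
  : Prop :=
  forall i, injective (iota i) /\
    forall x, f i x = 0 <-> exists y, iota i y = x.

Definition is_cokernel (X Y C : cplx L) (f : chain_map X Y) (pi : chain_map Y C)
  : Prop :=
  forall i, (forall z, exists y, pi i y = z) /\
    forall y, pi i y = 0 <-> exists x, f i x = y.

End Ops.

(* Kernel and cokernel both sit in a sequence A --a--> B --b--> C of complexes
   that is split exact in every degree, so B is A (+) C with a differential
   twisted by the connecting map h = r d s : C -> A[1], and the sequence splits
   as complexes exactly when h is null-homotopic.  For an idempotent e of A,
   twisting B only by e h factors b as B --(1 - a e r)--> B_e --b--> C; when b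
   is irreducible, either the first factor is a section, which forces e = 0, or
   the second is a retraction, which makes (1 - e) h null-homotopic.  If
   A = A1 (+) A2 with both summands non-zero, the homotopies for the two
   complementary idempotents add up to one for h, so b would be a retraction.
   The cokernel case is dual, twisting by h e. *)

From mathcomp Require Import all_boot all_order all_algebra.
From Stdlib Require Import ClassicalEpsilon.
Set Implicit Arguments. Unset Strict Implicit. Unset Printing Implicit Defensive.
Import GRing.Theory.
Local Open Scope ring_scope.

Lemma dependent_choice (I : Type) (T : I -> Type) (P : forall i, T i -> Prop) :
  (forall i, exists x, P i x) -> exists g : forall i, T i, forall i, P i (g i).
Proof.
move=> H; exists (fun i => proj1_sig (constructive_indefinite_description _ (H i))).
by move=> i; exact: proj2_sig.
Qed.

Lemma big_cast_ord (V : nmodType) m n (E : m = n) (F : 'I_n -> V) :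
  \sum_(i < m) F (cast_ord E i) = \sum_(i < n) F i.
Proof. by case: n / E F => F; apply: eq_bigr => i _; rewrite cast_ord_id. Qed.

Section Linear.
Variables (L : nzRingType) (M N P : lmodType L^c).

Lemma linD (g : M -> N) : lin g -> forall x y, g (x + y) = g x + g y.
Proof. by move=> Hg x y; have := Hg 1 x y; rewrite !scale1r. Qed.

Lemma lin0 (g : M -> N) : lin g -> g 0 = 0.
Proof. by move=> Hg; apply: (@addrI _ (g 0)); rewrite -linD // !addr0. Qed.

Lemma linZ (g : M -> N) : lin g -> forall a x, g (a *: x) = a *: g x.
Proof. by move=> Hg a x; rewrite -[a *: x]addr0 Hg (lin0 Hg) addr0. Qed.

Lemma linN (g : M -> N) : lin g -> forall x, g (- x) = - g x.
Proof. by move=> Hg x; apply/eqP; rewrite -addr_eq0 -linD // addNr lin0. Qed.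

Lemma linB (g : M -> N) : lin g -> forall x y, g (x - y) = g x - g y.
Proof. by move=> Hg x y; rewrite linD // linN. Qed.

Lemma lin_id : lin (fun x : M => x).
Proof. by []. Qed.

Lemma lin_comp (g : N -> P) (g' : M -> N) : lin g -> lin g' -> lin (fun x => g (g' x)).
Proof. by move=> Hg Hg' a x y; rewrite Hg' Hg. Qed.

Lemma lin_add (g g' : M -> N) : lin g -> lin g' -> lin (fun x => g x + g' x).
Proof. by move=> Hg Hg' a x y; rewrite Hg Hg' scalerDr addrACA. Qed.

Lemma lin_opp (g : M -> N) : lin g -> lin (fun x => - g x).
Proof. by move=> Hg a x y; rewrite Hg opprD scalerN. Qed.

Lemma lin_sub (g g' : M -> N) : lin g -> lin g' -> lin (fun x => g x - g' x).
Proof. by move=> Hg Hg'; apply: lin_add => //; exact: lin_opp. Qed.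

End Linear.
Arguments lin_id {L M}.

Section Retract.
Variables (L : nzRingType) (M N : lmodType L^c) (q : M -> N) (e : N -> M).
Hypotheses (q_lin : lin q) (qe : forall y, q (e y) = y).

Lemma fin_gen_retract : fin_gen M -> fin_gen N.
Proof.
move=> [s Hs]; exists (map q s) => y; have [c Hc] := Hs (e y).
exists (fun i => c (cast_ord (size_map q s) i)).
rewrite -{1}(qe y) Hc (big_morph q (linD q_lin) (lin0 q_lin)) -(big_cast_ord (size_map q s)).
apply: eq_bigr => -[i Hi] _; rewrite (linZ q_lin) /= (nth_map 0) //.
by rewrite size_map in Hi.
Qed.

Lemma projective_mod_retract : lin e -> projective_mod M -> projective_mod N.
Proof.
move=> e_lin HM A B g h Hg Hh g_onto.
have [h' [Hh' Hgh']] := HM A B g (fun x => h (q x)) Hg (lin_comp Hh q_lin) g_onto.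
by exists (fun p => h' (e p)); split=> [|p]; [exact: lin_comp | rewrite Hgh' qe].
Qed.

End Retract.

Lemma in_Cn_retract (L : nzRingType) n (X Y : cplx L)
    (q : forall i, cobj X i -> cobj Y i) (e : forall i, cobj Y i -> cobj X i) :
  (forall i, lin (q i)) -> (forall i, lin (e i)) -> (forall i y, q i (e i y) = y) ->
  in_Cn n X -> in_Cn n Y.
Proof.
move=> q_lin e_lin qe [HX X0]; split=> [i | i Hi y].
  split; [exact: fin_gen_retract (qe i) (HX i).1 |].
  exact: projective_mod_retract (qe i) (e_lin i) (HX i).2.
by rewrite -(qe i y) (X0 i Hi (e i y)) (lin0 (q_lin i)).
Qed.

Section ChainMaps.
Variables (L : nzRingType) (X Y Z : cplx L).

Lemma cmD (f : chain_map X Y) i x y : f i (x + y) = f i x + f i y.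
Proof. exact: linD (cm_lin f i) x y. Qed.

Lemma cmB (f : chain_map X Y) i x y : f i (x - y) = f i x - f i y.
Proof. exact: linB (cm_lin f i) x y. Qed.

Lemma cmN (f : chain_map X Y) i x : f i (- x) = - f i x.
Proof. exact: linN (cm_lin f i) x. Qed.

Lemma cm0 (f : chain_map X Y) i : f i 0 = 0.
Proof. exact: lin0 (cm_lin f i). Qed.

Lemma cdD i x y : cd X i (x + y) = cd X i x + cd X i y.
Proof. exact: linD (cd_lin X i) x y. Qed.

Lemma cdB i x y : cd X i (x - y) = cd X i x - cd X i y.
Proof. exact: linB (cd_lin X i) x y. Qed.

Lemma cdN i x : cd X i (- x) = - cd X i x.
Proof. exact: linN (cd_lin X i) x. Qed.

Definition cm_comp (g : chain_map Y Z) (f : chain_map X Y) : chain_map X Z :=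
  ChainMap (fun i x => g i (f i x)) (fun i => lin_comp (cm_lin g i) (cm_lin f i))
    (fun i x => etrans (congr1 (g (i + 1)) (cm_comm f i x)) (cm_comm g i (f i x))).

Lemma cplx_zero_summand (i1 : chain_map Y X) (p1 : chain_map X Y) :
  (forall i y, p1 i (i1 i y) = y) -> (forall i x, i1 i (p1 i x) = 0) -> cplx_zero Y.
Proof.
move=> p1i1 e1_0 i y; have := e1_0 i (i1 i y).
by rewrite p1i1 -{2}(p1i1 i y) => ->; rewrite cm0.
Qed.

End ChainMaps.

Definition degreewise_split (L : nzRingType) (A B C : cplx L)
    (a : chain_map A B) (b : chain_map B C)
    (r : forall i, cobj B i -> cobj A i) (s : forall i, cobj C i -> cobj B i) : Prop :=
  [/\ forall i, lin (r i), forall i, lin (s i), forall i x, r i (a i x) = x,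
      forall i z, b i (s i z) = z & forall i y, a i (r i y) + s i (b i y) = y].

Definition nullhomotopy (L : nzRingType) (C A : cplx L)
    (k : forall i, cobj C i -> cobj A (i + 1)) (sigma : forall i, cobj C i -> cobj A i) : Prop :=
  (forall i, lin (sigma i)) /\
  forall i z, sigma (i + 1) (cd C i z) = cd A i (sigma i z) + k i z.

Section DegreewiseSplit.
Local Unset Implicit Arguments.
Context {L : nzRingType} {A B C : cplx L} {a : chain_map A B} {b : chain_map B C}.
Context {r : forall i, cobj B i -> cobj A i} {s : forall i, cobj C i -> cobj B i}.
Hypothesis split : degreewise_split a b r s.

Let r_lin i : lin (r i). Proof. by case: split. Qed.
Let s_lin i : lin (s i). Proof. by case: split. Qed.
Let ra i x : r i (a i x) = x. Proof. by case: split. Qed.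
Let bs i z : b i (s i z) = z. Proof. by case: split. Qed.
Let ar_sb i y : a i (r i y) + s i (b i y) = y. Proof. by case: split. Qed.

Lemma split_ba i x : b i (a i x) = 0.
Proof.
have := ar_sb i (a i x); rewrite ra -[RHS]addr0 => /addrI sba0.
by rewrite -[b i (a i x)]bs sba0 cm0.
Qed.

Lemma split_in_Cn_kernel {n} : in_Cn n B -> in_Cn n A.
Proof. exact: in_Cn_retract r_lin (cm_lin a) ra. Qed.

Lemma split_in_Cn_cokernel {n} : in_Cn n B -> in_Cn n C.
Proof. exact: in_Cn_retract (cm_lin b) s_lin bs. Qed.

Definition connecting i (z : cobj C i) : cobj A (i + 1) := r (i + 1) (cd B i (s i z)).

Lemma connecting_lin i : lin (connecting i).
Proof. exact: lin_comp (r_lin _) (lin_comp (cd_lin B i) (s_lin i)). Qed.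

Lemma split_r_cd i y : r (i + 1) (cd B i y) = cd A i (r i y) + connecting i (b i y).
Proof. by rewrite -{1}(ar_sb i y) cdD -cm_comm (linD (r_lin _)) ra. Qed.

Lemma split_cd_s i z : cd B i (s i z) = a (i + 1) (connecting i z) + s (i + 1) (cd C i z).
Proof. by rewrite -{1}(ar_sb _ (cd B i (s i z))) cm_comm bs. Qed.

Lemma connecting_anticomm i z :
  cd A (i + 1) (connecting i z) + connecting (i + 1) (cd C i z) = 0.
Proof.
have := split_r_cd (i + 1) (cd B i (s i z)).
by rewrite cd_cd (lin0 (r_lin _)) cm_comm bs => <-.
Qed.

Lemma retraction_of_nullhomotopy sigma : nullhomotopy connecting sigma -> is_retraction b.
Proof.
move=> [sigma_lin Hsigma].
have as_lin i : lin (fun z => a i (sigma i z) + s i z).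
  exact: lin_add (lin_comp (cm_lin a i) (sigma_lin i)) (s_lin i).
have as_comm i z : a (i + 1) (sigma (i + 1) (cd C i z)) + s (i + 1) (cd C i z)
                 = cd B i (a i (sigma i z) + s i z).
  by rewrite Hsigma cmD cdD split_cd_s -cm_comm addrA.
by exists (ChainMap _ as_lin as_comm) => i z /=; rewrite cmD split_ba bs add0r.
Qed.

Lemma section_of_nullhomotopy sigma : nullhomotopy connecting sigma -> is_section a.
Proof.
move=> [sigma_lin Hsigma].
have rb_lin i : lin (fun y => r i y - sigma i (b i y)).
  exact: lin_sub (r_lin i) (lin_comp (sigma_lin i) (cm_lin b i)).
have rb_comm i y : r (i + 1) (cd B i y) - sigma (i + 1) (b (i + 1) (cd B i y))
                 = cd A i (r i y - sigma i (b i y)).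
  by rewrite split_r_cd cm_comm Hsigma cdB opprD addrACA subrr addr0.
exists (ChainMap _ rb_lin rb_comm) => i x /=.
by rewrite ra split_ba (lin0 (sigma_lin i)) subr0.
Qed.

Lemma section_of_zero_kernel : cplx_zero A -> is_section b.
Proof.
move=> A0.
have s_comm i z : s (i + 1) (cd C i z) = cd B i (s i z).
  by rewrite split_cd_s (A0 _ (connecting i z)) cm0 add0r.
exists (ChainMap _ s_lin s_comm) => i y /=.
by rewrite -{2}(ar_sb i y) (A0 i (r i y)) cm0 add0r.
Qed.

Lemma retraction_of_zero_cokernel : cplx_zero C -> is_retraction a.
Proof.
move=> C0.
have r_comm i y : r (i + 1) (cd B i y) = cd A i (r i y).
  by rewrite split_r_cd (C0 i (b i y)) (lin0 (connecting_lin i)) addr0.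
exists (ChainMap _ r_lin r_comm) => i y /=.
by rewrite -{2}(ar_sb i y) (C0 i (b i y)) (lin0 (s_lin i)) addr0.
Qed.

Section Twist.
Variable k : forall i, cobj C i -> cobj A (i + 1).
Hypothesis k_lin : forall i, lin (k i).
Hypothesis k_anticomm : forall i z, cd A (i + 1) (k i z) + k (i + 1) (cd C i z) = 0.

Definition twist_d i (y : cobj B i) : cobj B (i + 1) := cd B i y - a (i + 1) (k i (b i y)).

Lemma twist_d_lin i : lin (twist_d i).
Proof. exact: lin_sub (cd_lin B i) (lin_comp (cm_lin a _) (lin_comp (k_lin i) (cm_lin b i))). Qed.

Lemma twist_d_d i y : twist_d (i + 1) (twist_d i y) = 0.
Proof.
rewrite /twist_d cdB cd_cd sub0r cmB split_ba subr0 -(cm_comm a) (cm_comm b).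
by rewrite -opprD -cmD k_anticomm cm0 oppr0.
Qed.

Definition twist : cplx L := Cplx L (cobj B) twist_d twist_d_lin twist_d_d.

Lemma twist_a_comm i x : a (i + 1) (cd A i x) = cd twist i (a i x).
Proof. by rewrite /= /twist_d split_ba (lin0 (k_lin i)) cm0 subr0 cm_comm. Qed.

Lemma twist_b_comm i y : b (i + 1) (cd twist i y) = cd C i (b i y).
Proof. by rewrite /= /twist_d cmB split_ba subr0 cm_comm. Qed.

Definition twist_a : chain_map A twist := @ChainMap L A twist a (cm_lin a) twist_a_comm.
Definition twist_b : chain_map twist C := @ChainMap L twist C b (cm_lin b) twist_b_comm.

End Twist.

Section Irreducible.
Context {n : nat}.
Hypothesis B_in_Cn : in_Cn n B.

Lemma irreducible_right_idempotent (e : chain_map A A) :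
  irreducible n b -> (forall i x, e i (e i x) = e i x) ->
  (forall i x, e i x = 0) \/
  exists sigma, nullhomotopy (fun i z => connecting i z - e (i + 1) (connecting i z)) sigma.
Proof.
move=> b_irr e_idem.
pose k i z := e (i + 1) (connecting i z).
have k_lin i : lin (k i) := lin_comp (cm_lin e _) (connecting_lin i).
have k_anticomm i z : cd A (i + 1) (k i z) + k (i + 1) (cd C i z) = 0.
  by rewrite /k -cm_comm -cmD connecting_anticomm cm0.
pose Z := twist k k_lin k_anticomm.
pose u i y := y - a i (e i (r i y)).
have u_lin i : lin (u i).
  exact: lin_sub lin_id (lin_comp (cm_lin a i) (lin_comp (cm_lin e i) (r_lin i))).
have u_comm i y : u (i + 1) (cd B i y) = cd Z i (u i y).
  rewrite /u /= /twist_d split_r_cd cmB split_ba subr0 cdB -!cm_comm.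
  by rewrite !cmD opprD addrA.
have b_factor i y : b i y = twist_b k k_lin k_anticomm i (@ChainMap L B Z u u_lin u_comm i y).
  by rewrite /= /u cmB split_ba subr0.
case: (b_irr.2.2 Z _ _ B_in_Cn b_factor) => [[v v_u] | [t b_t]].
- left=> i x.
  have u_ae : u i (a i (e i x)) = 0 by rewrite /u ra e_idem subrr.
  have ae0 : a i (e i x) = 0 by rewrite -(v_u i (a i (e i x))) /= u_ae cm0.
  by rewrite -(ra i (e i x)) ae0 (lin0 (r_lin i)).
- right; exists (fun i z => r i (t i z)); split=> [i | i z].
    exact: lin_comp (r_lin i) (cm_lin t i).
  have bt j w : b j (t j w) = w := b_t j w.
  by rewrite cm_comm /= /twist_d (linB (r_lin _)) ra split_r_cd bt addrA.
Qed.

Lemma irreducible_left_idempotent (e : chain_map C C) :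
  irreducible n a -> (forall i z, e i (e i z) = e i z) ->
  (forall i z, e i z = 0) \/
  exists sigma, nullhomotopy (fun i z => connecting i z - connecting i (e i z)) sigma.
Proof.
move=> a_irr e_idem.
pose k i z := connecting i (e i z).
have k_lin i : lin (k i) := lin_comp (connecting_lin i) (cm_lin e i).
have k_anticomm i z : cd A (i + 1) (k i z) + k (i + 1) (cd C i z) = 0.
  by rewrite /k cm_comm connecting_anticomm.
pose Z := twist k k_lin k_anticomm.
pose g i y := y - s i (e i (b i y)).
have g_lin i : lin (g i).
  exact: lin_sub lin_id (lin_comp (s_lin i) (lin_comp (cm_lin e i) (cm_lin b i))).
have g_comm i y : g (i + 1) (cd Z i y) = cd B i (g i y).
  rewrite /g /= /twist_d cmB split_ba subr0 cdB split_cd_s !cm_comm.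
  by rewrite opprD addrA.
have a_factor i x : a i x = @ChainMap L Z B g g_lin g_comm i (twist_a k k_lin k_anticomm i x).
  by rewrite /= /g split_ba cm0 (lin0 (s_lin i)) subr0.
case: (a_irr.2.2 Z _ _ B_in_Cn a_factor) => [[v v_a] | [t g_t]].
- right; exists (fun i z => - v i (s i z)); split=> [i | i z].
    exact: lin_opp (lin_comp (cm_lin v i) (s_lin i)).
  have := cm_comm v i (s i z); rewrite /= /twist_d split_cd_s bs !cmB cmD !v_a.
  move=> vsd; rewrite cdN -vsd /k.
  set w := v _ _; set h := connecting i z; set q := connecting i (e i z).
  by rewrite opprB (addrC (q - _)) addrA subrK opprD addNKr.
- left=> i z.
  have := congr1 (b i) (g_t i (s i z)); rewrite /= /g cmB !bs => <-.
  by rewrite cmB e_idem subrr.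
Qed.

Lemma split_kernel_indecomposable : irreducible n b -> indecomposable A.
Proof.
move=> b_irr; split=> [A0 | A1 A2 i1 i2 p1 p2 p1i1 p2i2 p2i1 p1i2 p1_p2].
  exact: b_irr.1 (section_of_zero_kernel A0).
have [e1_0 | [sigma1 [sigma1_lin Hsigma1]]] :=
  irreducible_right_idempotent (cm_comp i1 p1) b_irr (fun i x => congr1 (i1 i) (p1i1 i _)).
  by left; exact: cplx_zero_summand p1i1 e1_0.
have [e2_0 | [sigma2 [sigma2_lin Hsigma2]]] :=
  irreducible_right_idempotent (cm_comp i2 p2) b_irr (fun i x => congr1 (i2 i) (p2i2 i _)).
  by right; exact: cplx_zero_summand p2i2 e2_0.
exfalso; apply: b_irr.2.1.
apply: (@retraction_of_nullhomotopy
  (fun i z => i2 i (p2 i (sigma1 i z)) + i1 i (p1 i (sigma2 i z)))).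
split=> [i | i z].
  by apply: lin_add; apply: lin_comp (cm_lin _ i) (lin_comp (cm_lin _ i) _).
rewrite Hsigma1 Hsigma2 /= !cmD !cmN p2i1 p1i2 !cm0 !subr0 cdD.
rewrite -(cm_comm i2) -(cm_comm p2) -(cm_comm i1) -(cm_comm p1) addrACA.
by rewrite (addrC (i2 _ (p2 _ (connecting _ _)))) p1_p2.
Qed.

Lemma split_cokernel_indecomposable : irreducible n a -> indecomposable C.
Proof.
move=> a_irr; split=> [C0 | C1 C2 i1 i2 p1 p2 p1i1 p2i2 p2i1 p1i2 p1_p2].
  exact: a_irr.2.1 (retraction_of_zero_cokernel C0).
have [e1_0 | [sigma1 [sigma1_lin Hsigma1]]] :=
  irreducible_left_idempotent (cm_comp i1 p1) a_irr (fun i z => congr1 (i1 i) (p1i1 i _)).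
  by left; exact: cplx_zero_summand p1i1 e1_0.
have [e2_0 | [sigma2 [sigma2_lin Hsigma2]]] :=
  irreducible_left_idempotent (cm_comp i2 p2) a_irr (fun i z => congr1 (i2 i) (p2i2 i _)).
  by right; exact: cplx_zero_summand p2i2 e2_0.
exfalso; apply: a_irr.1.
apply: (@section_of_nullhomotopy
  (fun i z => sigma1 i (i2 i (p2 i z)) + sigma2 i (i1 i (p1 i z)))).
split=> [i | i z].
  by apply: lin_add; apply: lin_comp _ (lin_comp (cm_lin _ i) (cm_lin _ i)).
rewrite (cm_comm p2) (cm_comm i2) (cm_comm p1) (cm_comm i1) Hsigma1 Hsigma2 /=.
rewrite p1i2 p2i1 !cm0 (lin0 (connecting_lin i)) !subr0 cdD addrACA.
by rewrite -(linD (connecting_lin i)) (addrC (i2 _ _)) p1_p2.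
Qed.

End Irreducible.

End DegreewiseSplit.

Section KernelCokernel.
Variables (L : nzRingType) (X Y : cplx L) (f : chain_map X Y).

Lemma kernel_degreewise_split (K : cplx L) (iota : chain_map K X) :
  type_ret f -> is_kernel f iota -> exists r s, degreewise_split iota f r s.
Proof.
move=> f_ret iota_ker; have [s Hs] := dependent_choice f_ret.
have s_lin i : lin (s i) := (Hs i).1.
have fs i y : f i (s i y) = y := (Hs i).2 y.
have r_ex i x : exists k, iota i k = x - s i (f i x).
  by apply/(iota_ker i).2; rewrite cmB fs subrr.
have [r Hr] := dependent_choice (fun i => dependent_choice (r_ex i)).
have r_lin i : lin (r i).
  move=> c x y; apply: (iota_ker i).1.
  by rewrite (cm_lin iota i) !Hr (cm_lin f i) s_lin scalerBr opprD addrACA.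
have f_iota i k : f i (iota i k) = 0 by apply/(iota_ker i).2; exists k.
exists r, s; split=> // [i k | i x]; last by rewrite Hr subrK.
by apply: (iota_ker i).1; rewrite Hr f_iota (lin0 (s_lin i)) subr0.
Qed.

Lemma cokernel_degreewise_split (C : cplx L) (pi : chain_map Y C) :
  type_sec f -> is_cokernel f pi -> exists r t, degreewise_split f pi r t.
Proof.
move=> f_sec pi_cok; have [r Hr] := dependent_choice f_sec.
have r_lin i : lin (r i) := (Hr i).1.
have rf i x : r i (f i x) = x := (Hr i).2 x.
have [pre pi_pre] := dependent_choice (fun i => dependent_choice (pi_cok i).1).
pose proj i y := y - f i (r i y).
have proj_lin i : lin (proj i) := lin_sub lin_id (lin_comp (cm_lin f i) (r_lin i)).
have proj_pi i y : proj i (pre i (pi i y)) = proj i y.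
  apply/eqP; rewrite -subr_eq0 -(linB (proj_lin i)).
  have [x <-] : exists x, f i x = pre i (pi i y) - y.
    by apply/(pi_cok i).2; rewrite cmB pi_pre subrr.
  by rewrite /proj rf subrr.
have pi_f i x : pi i (f i x) = 0 by apply/(pi_cok i).2; exists x.
exists r, (fun i z => proj i (pre i z)); split=> // [i c z z' | i z | i y] /=.
- have -> : c *: z + z' = pi i (c *: pre i z + pre i z') by rewrite (cm_lin pi i) !pi_pre.
  by rewrite proj_pi proj_lin.
- by rewrite /proj cmB pi_f pi_pre subr0.
- by rewrite proj_pi /proj addrC subrK.
Qed.

End KernelCokernel.

Theorem theorem2p8 (L : nzRingType) (HL : artin_algebra L) (n : nat)
  (Hn : (2 <= n)%N) (X Y : cplx L) (f : chain_map X Y)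
  (HX : in_Cn n X) (HY : in_Cn n Y) (Hirr : irreducible n f)
  (Hind : indecomposable X \/ indecomposable Y) :
  (type_ret f ->
     forall (K : cplx L) (iota : chain_map K X), is_kernel f iota ->
       ~ cplx_zero K /\ indecomposable K /\ in_Cn n K) /\
  (type_sec f ->
     forall (C : cplx L) (pi : chain_map Y C), is_cokernel f pi ->
       indecomposable C /\ in_Cn n C).
Proof.
split=> [f_ret K iota iota_ker | f_sec C pi pi_cok].
- have [r [s Hsplit]] := kernel_degreewise_split f_ret iota_ker.
  have K_indec := split_kernel_indecomposable Hsplit HX Hirr.
  have K_in_Cn := split_in_Cn_kernel Hsplit HX.
  by split; [exact: K_indec.1 | split].
- have [r [t Hsplit]] := cokernel_degreewise_split f_sec pi_cok.
  have C_indec := split_cokernel_indecomposable Hsplit HY Hirr.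
  have C_in_Cn := split_in_Cn_cokernel Hsplit HY.
  by split.
Qed.
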